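(* Let $1\le\ell_1\le\dots\le\ell_r\le n$, $K\in B(\varpi_{\ell_r})\otimes\cdots\otimes B(\varpi_{\ell_1})$, $\ell\in[n]$ with $\ell\ge\ell_r$, and $j\in[n-1]$. Then $$tT_j^{-1}\sum_{C\in B(\varpi_\ell)}X^C\Psi_{C\otimes K}=\sum_{D\in B(\varpi_\ell)}X^Df_{D,K},\qquad T_j\sum_{C\in B(\varpi_\ell)}X^C\Psi_{C\otimes K}=\sum_{D\in B(\varpi_\ell)}X^Dg_{D,K},$$ where $$f_{D,K}=\begin{cases}tT_j^{-1}\Psi_{s_jD\otimes K},& s_jD\le D,\\ T_j\Psi_{s_jD\otimes K}+(1-t)\Psi_{D\otimes K},& s_jD\ge D,\end{cases}\qquad g_{D,K}=\begin{cases}tT_j^{-1}\Psi_{s_jD\otimes K}-(1-t)\Psi_{D\otimes K},& s_jD\le D,\\ T_j\Psi_{s_jD\otimes K},& s_jD\ge D\end{cases}$$ (the two cases agree when $s_jD=D$).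
   Context: Fix $n\ge1$, $[n]=\{1,\dots,n\}$. $S_n$ with simple transpositions $s_i$ and length $\ell(\cdot)$ acts on $\mathbb Z^n$ by permuting coordinates; $\varpi_k=\varepsilon_1+\dots+\varepsilon_k$; $S_{n,\lambda}$ is the stabilizer of $\lambda$. The affine Hecke algebra $H$ is the $\mathbb Z[t^{\pm1}]$-algebra with generators $T_1,\dots,T_{n-1},X_1^{\pm1},\dots,X_n^{\pm1}$ and relations $T_i^2=(t-1)T_i+t$, $T_iT_{i+1}T_i=T_{i+1}T_iT_{i+1}$, $T_iT_j=T_jT_i$ ($|i-j|>1$), $X_iX_j=X_jX_i$, $T_iX_iT_i=tX_{i+1}$, $T_iX_j=X_jT_i$ ($j\notin\{i,i+1\}$); $tT_i^{-1}=T_i+1-t$. $T_w$ via reduced words; $H_n=\mathrm{span}\{T_w\}$, $H_{n,\lambda}=\mathrm{span}\{T_w:w\in S_{n,\lambda}\}$, $\mathbf 1_\lambda=\sum_{w\in S_{n,\lambda}}T_w$. Columns: $B(\varpi_\ell)$ is the set of $C=(c_1<\dots<c_\ell)\subseteq[n]$; order $E\le F$ iff $e_i\le f_i$ for all $i$; $s_jC$ is the column whose underlying set is the image of $C$ under $(j,j+1)$; $X^C=\prod_{c\in C}X_c$; $u_C\in S_n$ sends $k\mapsto c_k$ ($k\le\ell$) and $\ell+1,\dots,n$ increasingly onto $[n]\setminus C$. $B(\varpi_{\ell_r})\otimes\cdots\otimes B(\varpi_{\ell_1})$ is the set of sequences $C_r\otimes\cdots\otimes C_1$, $C_i\in B(\varpi_{\ell_i})$;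 $C\otimes K$ prepends a column. $\Psi$: each $h\in H_n$ is uniquely $\sum_{F\in B(\varpi_\ell)}T_{u_F}h_F$, $h_F\in H_{n,\varpi_\ell}$. $\Psi_C=t^{\ell(u_C)}(T_{u_C^{-1}})^{-1}\mathbf 1_{\varpi_\ell}$ for $C\in B(\varpi_\ell)$; for $T=C\otimes S$ ($C\in B(\varpi_\ell)$, $S$ with columns of length $\le\ell$), write $\Psi_S=\sum_ET_{u_E}h_{E,S}$ ($h_{E,S}\in H_{n,\varpi_\ell}$) and set $\Psi_T=t^{\ell(u_C)}(T_{u_C^{-1}})^{-1}h_{C,S}$. *)

(* Conventions: 0-based indices. The paper's X_i (i in [n]) is
   XA (i-1); the paper's T_j / s_j (j in [n-1]) is TA (j-1) / sp (j-1), which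
   swaps positions j-1 and j of 'I_n. *)
From HB Require Import structures.
From mathcomp Require Import all_boot all_order all_fingroup all_algebra.
Set Implicit Arguments. Unset Strict Implicit. Unset Printing Implicit Defensive.
Import Order.TTheory GRing.Theory.
Local Open Scope ring_scope.

Section Hecke.
Variable n : nat.

(* u o v as functions:  (u o v) x = u (v x). *)
Definition pcomp (u v : 'S_n) : 'S_n := (v * u)%g.

Definition perm_of (f : nat -> nat) : 'S_n :=
  odflt 1%g [pick w : 'S_n | [forall x : 'I_n, val (w x) == f (val x)]].

Definition swapnat (i k : nat) : nat :=
  if k == i then i.+1 else if k == i.+1 then i else k.

Definition sp (i : nat) : 'S_n := perm_of (swapnat i).

Definition len (w : 'S_n) : nat :=
  #|[set p : 'I_n * 'I_n | (p.1 < p.2)%N && (w p.2 < w p.1)%N]|.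

(* a reduced word [i1; ...; ik] with w = s_i1 o ... o s_ik *)
Fixpoint rword_rec (fuel : nat) (w : 'S_n) : seq nat :=
  match fuel with
  | 0 => [::]
  | f.+1 =>
    match [pick p : 'I_n * 'I_n | (val p.2 == (val p.1).+1) && (w p.2 < w p.1)%N] with
    | Some p => rcons (rword_rec f (pcomp w (sp (val p.1)))) (val p.1)
    | None => [::]
    end
  end.
Definition rword (w : 'S_n) : seq nat := rword_rec (len w) w.

Definition colset (C : {set 'I_n}) (l : nat) : bool := #|C| == l.
Definition leC (E F : {set 'I_n}) : bool :=
  all2 (fun e f : 'I_n => (e <= f)%N) (enum E) (enum F).
Definition sC (j : nat) (C : {set 'I_n}) : {set 'I_n} := (sp j) @: C.
(* u_C : k |-> c_k (k < |C|), remaining positions increasingly onto the complement *)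
Definition uC (C : {set 'I_n}) : 'S_n :=
  perm_of (fun k => nth 0%N (map val (enum C ++ enum (~: C))) k).
Definition stab (l : nat) (w : 'S_n) : bool :=
  [forall x : 'I_n, (x < l)%N == (w x < l)%N].

Variable R : comUnitRingType.
Variable t : R.

(* finite Hecke algebra H_n, elements written in the basis T_w: h = sum_w h w T_w *)
Local Notation HF := {ffun 'S_n -> R^o}.

(* coefficient of T_v in T_i T_w *)
Definition coefTi (i : nat) (w v : 'S_n) : R :=
  let sw := pcomp (sp i) w in
  if (len w < len sw)%N then (v == sw)%:R
  else (t - 1) * (v == w)%:R + t * (v == sw)%:R.

(* left multiplication by T_i, T_i^{-1} = t^{-1}(T_i + 1 - t) *)
Definition TiL (i : nat) (h : HF) : HF :=
  [ffun v => \sum_(w : 'S_n) h w * coefTi i w v].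
Definition TinvL (i : nat) (h : HF) : HF := t^-1 *: (TiL i h + (1 - t) *: h).

(* left multiplication by (T_w)^{-1} *)
Definition TinvW (w : 'S_n) (h : HF) : HF :=
  foldr TinvL h (rev (rword w)).

Definition oneL (l : nat) : HF := [ffun w => (stab l w)%:R].

(* h_E for h = sum_F T_{u_F} h_F, with h_F in H_{n,varpi_l}, l = |E| *)
Definition hproj (E : {set 'I_n}) (h : HF) : HF :=
  [ffun v => if stab #|E| v then h (pcomp (uC E) v) else 0].

(* Psi_T for T = C_r (x) ... (x) C_1, written as the list [:: C_r; ...; C_1] *)
Fixpoint Psi (T : seq {set 'I_n}) : HF :=
  match T with
  | [::] => 0
  | C :: Sq =>
    if Sq is [::] then t ^+ len (uC C) *: TinvW (uC C)^-1%g (oneL #|C|)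
    else t ^+ len (uC C) *: TinvW (uC C)^-1%g (hproj C (Psi Sq))
  end.

(* an R-algebra A with elements satisfying the defining relations of H
   (0-based: TA i for i.+1 < n, XA i and XAinv i for i < n) *)
Definition hecke_rels (A : algType R) (TA XA XAinv : nat -> A) : Prop :=
  (forall i, (i.+1 < n)%N -> TA i * TA i = (t - 1) *: TA i + t%:A) /\
     (
      forall i, (i.+2 < n)%N -> TA i * TA i.+1 * TA i = TA i.+1 * TA i * TA i.+1) /\
     (
      forall i k, (i.+1 < n)%N -> (k.+1 < n)%N -> (i.+1 < k)%N || (k.+1 < i)%N ->
                  TA i * TA k = TA k * TA i) /\
     (
      forall i k, (i < n)%N -> (k < n)%N -> XA i * XA k = XA k * XA i) /\
     (
      forall i, (i < n)%N -> XA i * XAinv i = 1 /\ XAinv i * XA i = 1) /\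
     (
      forall i, (i.+1 < n)%N -> TA i * XA i * TA i = t *: XA i.+1) /\
     (
      forall i k, (i.+1 < n)%N -> (k < n)%N -> k != i -> k != i.+1 ->
                  TA i * XA k = XA k * TA i).

Variable A : algType R.
Variable TA XA : nat -> A.

(* image in A of an element of H_n: T_w |-> T_{i1} ... T_{ik} *)
Definition phiA (h : HF) : A := \sum_(w : 'S_n) h w *: \prod_(i <- rword w) TA i.

Definition XC (C : {set 'I_n}) : A := \prod_(c in C) XA c.

(* images of f_{D,K}, g_{D,K}; t T_j^{-1} = T_j + 1 - t *)
Definition fDK (j : nat) (D : {set 'I_n}) (K : seq {set 'I_n}) : A :=
  if leC (sC j D) D then (TA j + (1 - t)%:A) * phiA (Psi (sC j D :: K))
  else TA j * phiA (Psi (sC j D :: K)) + (1 - t) *: phiA (Psi (D :: K)).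
Definition gDK (j : nat) (D : {set 'I_n}) (K : seq {set 'I_n}) : A :=
  if leC (sC j D) D then
    (TA j + (1 - t)%:A) * phiA (Psi (sC j D :: K)) - (1 - t) *: phiA (Psi (D :: K))
  else TA j * phiA (Psi (sC j D :: K)).

End Hecke.

From Pilot Require Import Defs.
From HB Require Import structures.
From mathcomp Require Import all_boot all_order all_fingroup all_algebra.
From mathcomp Require Import zify.

Import GRing.Theory.
Local Open Scope ring_scope.
Set Implicit Arguments. Unset Strict Implicit.

(* Among the X_i only X_j and X_{j+1} fail to commute with T_j, and the
   relations T_j^2 = (t-1)T_j + t, T_j X_j T_j = t X_{j+1} give
     T_j X^C = X^{s_jC} T_j + (1-t) ([j in C, j+1 notin C] X^{s_jC}
                                    - [j+1 in C, j notin C] X^C).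
   Multiplying sum_C X^C P_C by T_j and reindexing the first two terms along
   the involution C |-> s_jC (which preserves |C|) yields sum_D X^D g_D for an
   arbitrary family P; taking P_C = Psi_{C (x) K} gives the second identity.
   The first follows from t T_j^{-1} = T_j + 1 - t and
   f_{D,K} = g_{D,K} + (1-t) Psi_{D (x) K}. *)

Lemma swapnatK j : involutive (swapnat j).
Proof. by move=> k; rewrite /swapnat; do ! case: eqP; lia. Qed.

Lemma sorted_enum_ord n (E : {set 'I_n}) : sorted (fun a b : 'I_n => (a < b)%N) (enum E).
Proof.
suff : sorted ltn (map val (enum E)) by rewrite sorted_map.
rewrite -[enum _](eq_filter (mem_enum _)) -(eq_filter (mem_map val_inj _)).
by rewrite -filter_map (sorted_filter ltn_trans) // unlock val_ord_enum iota_ltn_sorted.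
Qed.

Lemma card_sC n j (D : {set 'I_n}) : #|sC j D| = #|D|.
Proof. by rewrite card_imset //; apply: perm_inj. Qed.

Section SimpleTransposition.
Variables n j : nat.
Hypothesis hj : (j.+1 < n)%N.
Local Notation lo := (Ordinal (ltnW hj)).
Local Notation hi := (Ordinal hj).
Local Notation s := (sp n j).

Lemma sp_val x : s x = swapnat j x :> nat.
Proof.
rewrite /sp /Defs.perm_of.
case: (pickP (fun w : 'S_n => [forall y, val (w y) == swapnat j (val y)]))
  => [w /forallP /(_ x) /eqP // | none] /=.
have /negbT/forallPn [y /eqP []] := none (tperm lo hi).
rewrite /swapnat; case: (tpermP lo hi y) => [->|->|/eqP ylo /eqP yhi] /=.
- by rewrite eqxx.
- by rewrite gtn_eqF ?eqxx.
have /negbTE-> : val y != j by apply: contra ylo => /eqP e; apply/eqP/val_inj.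
by have /negbTE-> : val y != j.+1 by apply: contra yhi => /eqP e; apply/eqP/val_inj.
Qed.

Lemma spK : involutive s.
Proof. by move=> x; apply: ord_inj; rewrite !sp_val swapnatK. Qed.

Lemma sp_lo : s lo = hi.
Proof. by apply: ord_inj; rewrite sp_val /= /swapnat eqxx. Qed.

Lemma sp_hi : s hi = lo.
Proof. by apply: ord_inj; rewrite sp_val /= /swapnat gtn_eqF ?eqxx. Qed.

Lemma sp_id x : val x != j -> val x != j.+1 -> s x = x.
Proof. by move=> /negbTE xj /negbTE xj1; apply: ord_inj; rewrite sp_val /swapnat xj xj1. Qed.

Lemma mem_sC (D : {set 'I_n}) x : (x \in sC j D) = (s x \in D).
Proof. by rewrite /sC -{1}(spK x) mem_imset //; apply: perm_inj. Qed.

Lemma sCK : involutive (@sC n j).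
Proof. by move=> D; apply/setP => x; rewrite !mem_sC spK. Qed.

Lemma sC_id (D : {set 'I_n}) : (lo \in D) = (hi \in D) -> sC j D = D.
Proof.
move=> e; apply/setP => x; rewrite mem_sC.
have [->|xlo] := eqVneq x lo; first by rewrite sp_lo e.
have [->|xhi] := eqVneq x hi; first by rewrite sp_hi e.
by rewrite sp_id.
Qed.

Definition raises (D : {set 'I_n}) : bool := (lo \in D) && (hi \notin D).

Lemma raises_sC (D : {set 'I_n}) : raises (sC j D) = (hi \in D) && (lo \notin D).
Proof. by rewrite /raises !mem_sC sp_lo sp_hi. Qed.

Lemma enum_sC (D : {set 'I_n}) : ~~ ((lo \in D) && (hi \in D)) -> enum (sC j D) = map s (enum D).
Proof.
move=> not_both; pose ltO (a b : 'I_n) := (a < b)%N.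
apply: (@irr_sorted_eq _ ltO) => //.
- by move=> a b c; apply: ltn_trans.
- by move=> a; rewrite /ltO ltnn.
- exact: sorted_enum_ord.
- apply: (@homo_sorted_in _ _ (fun x => x \in D)); last exact: sorted_enum_ord.
    move=> a b aD bD; rewrite /ltO !sp_val /swapnat.
    have : ~~ ((a == j :> nat) && (b == j.+1 :> nat)).
      apply: contra not_both => /andP [/eqP ea /eqP eb].
      have -> : lo = a by apply: ord_inj.
      have -> : hi = b by apply: ord_inj.
      by rewrite aD bD.
    by do ! case: eqP; lia.
  by apply/allP => x; rewrite mem_enum.
- move=> x; rewrite mem_enum mem_sC -{2}(spK x) mem_map ?mem_enum //.
  exact: perm_inj.
Qed.

Lemma leC_sC (D : {set 'I_n}) : leC (sC j D) D = ~~ raises D.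
Proof.
have [e|ne] := eqVneq (lo \in D) (hi \in D).
  rewrite sC_id // /raises e andbN /leC.
  by elim: (enum D) => //= x e' ->; rewrite leqnn.
rewrite /leC enum_sC; last by move: ne; case: (lo \in D); case: (hi \in D).
have -> : forall e, all2 (fun a b : 'I_n => (a <= b)%N) (map s e) e
                   = all (fun x => (s x <= x)%N) e by elim=> //= x e ->.
apply/allP/idP => [le_s | /negPf raise x].
  by apply/andP => -[loD _]; move: (le_s lo); rewrite mem_enum sp_lo /= ltnn => /(_ loD).
rewrite mem_enum sp_val /swapnat => xD; case: eqP => [xj | _].
  have xlo : x = lo by apply: ord_inj.
  by move: raise ne; rewrite /raises -xlo xD; case: (hi \in D).
by case: eqP => [->|].
Qed.

Lemma sum_sC (V : nmodType) l (F : {set 'I_n} -> V) :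
  \sum_(C : {set 'I_n} | #|C| == l) F C = \sum_(C : {set 'I_n} | #|C| == l) F (sC j C).
Proof.
rewrite (reindex_inj (can_inj sCK)) /=.
by apply: eq_bigl => C; rewrite card_sC.
Qed.

End SimpleTransposition.

Lemma prod_perm_comm (R : pzSemiRingType) (I : eqType) (F : I -> R) (s1 s2 : seq I) :
  (forall x y, GRing.comm (F x) (F y)) -> perm_eq s1 s2 ->
  \prod_(i <- s1) F i = \prod_(i <- s2) F i.
Proof.
move=> Fcomm; elim: s1 s2 => [|a s1 IH] s2 eq12.
  by move: eq12; rewrite perm_sym => /perm_nilP ->.
have as2 : a \in s2 by rewrite -(perm_mem eq12) mem_head.
have -> : \prod_(i <- s2) F i = F a * \prod_(i <- rem a s2) F i.
  elim: s2 as2 {eq12} => // b s2 IH2; rewrite in_cons big_cons /= eq_sym.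
  have [-> //|ne /= as2] := eqVneq b a.
  by rewrite big_cons IH2 // !mulrA Fcomm.
by rewrite big_cons (IH (rem a s2)) // -(perm_cons a) (perm_trans eq12) ?perm_to_rem.
Qed.

Lemma prod_set_enum (R : pzSemiRingType) (I : finType) (F : I -> R) (C : {set I}) :
  \prod_(c in C) F c = \prod_(c <- enum C) F c.
Proof. by rewrite -big_filter deprecated_filter_index_enum. Qed.

Lemma scaler_unit_inj (R : unitRingType) (V : lmodType R) (k : R) :
  k \is a GRing.unit -> injective ( *:%R k : V -> V).
Proof. by move=> Uk x y e; rewrite -[x]scale1r -(mulVr Uk) -scalerA e scalerA mulVr ?scale1r. Qed.

Section HeckeRelations.
Variables (n : nat) (R : comUnitRingType) (t : R) (A : algType R).
Variables (TA XA XAinv : nat -> A).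
Hypotheses (t_unit : t \is a GRing.unit) (rels : hecke_rels n t TA XA XAinv).
Variable j : nat.
Hypothesis hj : (j.+1 < n)%N.
Local Notation lo := (Ordinal (ltnW hj)).
Local Notation hi := (Ordinal hj).
Local Notation s := (sp n j).
Local Notation Xs r := (\prod_(c <- r) XA (nat_of_ord c)).

Lemma mulT_Tshift : TA j * (TA j + (1 - t)%:A) = t%:A.
Proof.
case: rels => quad _.
by rewrite mulrDr mulr_algr quad // addrAC -scalerDl addrA subrK subrr scale0r add0r.
Qed.

Lemma mulTshift_T : (TA j + (1 - t)%:A) * TA j = t%:A.
Proof. by rewrite -[RHS]mulT_Tshift mulrDl mulrDr mulr_algl mulr_algr. Qed.

Lemma mulT_Xlo : TA j * XA j = XA j.+1 * TA j + (1 - t) *: XA j.+1.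
Proof.
case: rels => _ [_ [_ [_ [_ [TXT _]]]]].
apply: (scaler_unit_inj t_unit); rewrite -mulr_algr -mulT_Tshift mulrA TXT //.
by rewrite -scalerAl mulrDr mulr_algr.
Qed.

Lemma mulT_Xhi : TA j * XA j.+1 = XA j * TA j - (1 - t) *: XA j.+1.
Proof.
case: rels => _ [_ [_ [_ [_ [TXT _]]]]].
apply/eqP; rewrite eq_sym subr_eq; apply/eqP; apply: (scaler_unit_inj t_unit).
rewrite -mulr_algl -mulTshift_T -mulrA [TA j * (XA j * _)]mulrA TXT //.
by rewrite -scalerAr mulrDl mulr_algl.
Qed.

Lemma prod_sp_id (r : seq 'I_n) : lo \notin r -> hi \notin r -> Xs (map s r) = Xs r.
Proof.
move=> lo_r hi_r; rewrite big_map; apply: eq_big_seq => c cr; rewrite sp_id //.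
  by apply: contraNneq lo_r => cj; rewrite -(_ : c = lo) //; apply: ord_inj.
by apply: contraNneq hi_r => cj; rewrite -(_ : c = hi) //; apply: ord_inj.
Qed.

Lemma mulT_prod_sorted (r : seq 'I_n) : sorted (fun a b : 'I_n => (a < b)%N) r ->
  TA j * Xs r = Xs (map s r) * TA j
    + (1 - t) *: ((if (lo \in r) && (hi \notin r) then Xs (map s r) else 0)
                 - (if (hi \in r) && (lo \notin r) then Xs r else 0)).
Proof.
case: rels => _ [_ [_ [_ [_ [_ Tcomm]]]]].
elim: r => [|c r IH] /= r_sorted; first by rewrite !big_nil mulr1 mul1r subrr scaler0 addr0.
have /allP c_min : all (fun x : 'I_n => (c < x)%N) r.
  by apply: order_path_min r_sorted => a b d; apply: ltn_trans.
have not_in (x : 'I_n) : (x <= c)%N -> x \notin r.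
  by move=> xc; apply/negP => /c_min; rewrite ltnNge xc.
move: IH => /(_ (path_sorted r_sorted)); rewrite !big_cons !in_cons => IH.
have hi_lo : (hi == lo) = false by apply/eqP => /(f_equal val) /=; lia.
have [c_eq|c_lo] := eqVneq c lo.
  subst c.
  have /negbTE lo_r := not_in lo (leqnn _).
  rewrite hi_lo /= sp_lo /= mulrA mulT_Xlo mulrDl -mulrA IH lo_r /=.
  case: (boolP (hi \in r)) => hi_r /=.
    rewrite subrr scaler0 addr0 sub0r scalerN mulrDr mulrN mulrA.
    by rewrite -scalerAr -scalerAl subrK.
  by rewrite prod_sp_id ?lo_r // subrr scaler0 addr0 subr0 mulrA -scalerAl.
have [c_eq|c_hi] := eqVneq c hi.
  subst c.
  have lo_r := not_in lo (leqnSn _); have hi_r := not_in hi (leqnn _).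
  rewrite (negbTE lo_r) (negbTE hi_r) /= sp_hi /=.
  rewrite mulrA mulT_Xhi mulrBl -[XA j * TA j * _]mulrA IH (negbTE lo_r) (negbTE hi_r) /=.
  by rewrite subrr scaler0 addr0 sub0r scalerN mulrA -scalerAl prod_sp_id.
have c_j : (c != j :> nat) by apply: contra c_lo => /eqP cj; apply/eqP/ord_inj.
have c_j1 : (c != j.+1 :> nat) by apply: contra c_hi => /eqP cj; apply/eqP/ord_inj.
rewrite sp_id //.
rewrite mulrA Tcomm // -mulrA IH mulrDr mulrA; congr (_ + _).
by rewrite -scalerAr mulrBr; do 2 case: (_ && _); rewrite ?mulr0.
Qed.

Lemma XC_sC (C : {set 'I_n}) : XC XA (sC j C) = Xs (map s (enum C)).
Proof.
case: rels => _ [_ [_ [Xcomm _]]].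
rewrite /XC prod_set_enum; apply: prod_perm_comm => [x y | ]; first exact: Xcomm.
apply: uniq_perm; rewrite ?enum_uniq ?(map_inj_uniq perm_inj) ?enum_uniq // => x.
by rewrite mem_enum (mem_sC hj) -[x in RHS](spK hj) (mem_map perm_inj) mem_enum.
Qed.

Lemma mulT_XC (C : {set 'I_n}) :
  TA j * XC XA C = XC XA (sC j C) * TA j
    + (1 - t) *: ((if raises hj C then XC XA (sC j C) else 0)
                 - (if raises hj (sC j C) then XC XA C else 0)).
Proof.
rewrite raises_sC /raises XC_sC /XC prod_set_enum mulT_prod_sorted ?sorted_enum_ord //.
by rewrite !mem_enum.
Qed.

Lemma mulT_sum_XC l (P : {set 'I_n} -> A) :
  TA j * (\sum_(C : {set 'I_n} | #|C| == l) XC XA C * P C)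
  = \sum_(D : {set 'I_n} | #|D| == l) XC XA D * (TA j * P (sC j D)
      + (1 - t) *: (if raises hj (sC j D) then P (sC j D) - P D else 0)).
Proof.
pose shifted C := (1 - t) *: (if raises hj C then XC XA (sC j C) * P C else 0).
pose kept C := (1 - t) *: (if raises hj (sC j C) then XC XA C * P C else 0).
have expand C : TA j * (XC XA C * P C)
    = XC XA (sC j C) * (TA j * P C) + shifted C - kept C.
  rewrite mulrA mulT_XC mulrDl -mulrA -scalerAl mulrBl scalerBr addrA /shifted /kept.
  by case: (raises hj C); case: (raises hj (sC j C)); rewrite ?mul0r.
have reindexed : \sum_(C : {set 'I_n} | #|C| == l) (XC XA (sC j C) * (TA j * P C) + shifted C)
    = \sum_(D : {set 'I_n} | #|D| == l) (XC XA D * (TA j * P (sC j D))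
        + (1 - t) *: (if raises hj (sC j D) then XC XA D * P (sC j D) else 0)).
  by rewrite (sum_sC hj); apply: eq_bigr => D _; rewrite /shifted sCK.
rewrite mulr_sumr (eq_bigr _ (fun C _ => expand C)) sumrB reindexed -sumrB.
apply: eq_bigr => D _; rewrite /kept; case: (raises hj (sC j D)).
  by rewrite mulrDr -scalerAr mulrBr scalerBr addrA.
by rewrite !scaler0 subr0 !addr0.
Qed.

End HeckeRelations.

Section Coefficients.
Variables (n : nat) (R : comUnitRingType) (t : R) (A : algType R) (TA : nat -> A).
Variables (j : nat) (K : seq {set 'I_n}).
Local Notation Psi_of C := (phiA TA (Psi t (C :: K))).

Lemma fDK_gDK (D : {set 'I_n}) : fDK t TA j D K = gDK t TA j D K + (1 - t) *: Psi_of D.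
Proof. by rewrite /fDK /gDK; case: leC; rewrite ?subrK. Qed.

Lemma gDK_raises (hj : (j.+1 < n)%N) (D : {set 'I_n}) :
  gDK t TA j D K = TA j * Psi_of (sC j D)
    + (1 - t) *: (if raises hj (sC j D) then Psi_of (sC j D) - Psi_of D else 0).
Proof.
rewrite /gDK leC_sC raises_sC /raises mulrDl mulr_algl.
case: (boolP (Ordinal (ltnW hj) \in D)) => loD; case: (boolP (Ordinal hj \in D)) => hiD /=.
- by rewrite sC_id ?loD ?hiD // addrK scaler0 addr0.
- by rewrite scaler0 addr0.
- by rewrite scalerBr addrA.
by rewrite sC_id ?(negbTE loD) ?(negbTE hiD) // addrK scaler0 addr0.
Qed.

End Coefficients.

Unset Implicit Arguments. Set Strict Implicit.

Theorem lemma6p4 (n : nat) (R : comUnitRingType) (t : R) (A : algType R)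
    (TA XA XAinv : nat -> A) (K : seq {set 'I_n}) (l j : nat) :
  t \is a GRing.unit ->
  hecke_rels n t TA XA XAinv ->
  K != [::] ->
  sorted (fun a b : nat => (b <= a)%N) (map (fun C : {set 'I_n} => #|C|) K) ->
  all (fun C : {set 'I_n} => (0 < #|C|)%N) K ->
  (0 < l <= n)%N ->
  (#|head set0 K| <= l)%N ->
  (0 < j.+1 < n)%N ->
  (TA j + (1 - t)%:A) *
      (\sum_(C : {set 'I_n} | #|C| == l) XC XA C * phiA TA (Psi t (C :: K)))
    = \sum_(D : {set 'I_n} | #|D| == l) XC XA D * fDK t TA j D K
  /\
  TA j * (\sum_(C : {set 'I_n} | #|C| == l) XC XA C * phiA TA (Psi t (C :: K)))
    = \sum_(D : {set 'I_n} | #|D| == l) XC XA D * gDK t TA j D K.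
Proof.
move=> t_unit rels _ _ _ _ _ /andP [_ hj].
have g_identity : TA j * (\sum_(C : {set 'I_n} | #|C| == l) XC XA C * phiA TA (Psi t (C :: K)))
    = \sum_(D : {set 'I_n} | #|D| == l) XC XA D * gDK t TA j D K.
  rewrite (mulT_sum_XC t_unit rels hj).
  by apply: eq_bigr => D _; rewrite (gDK_raises _ _ _ hj).
split=> //.
rewrite mulrDl mulr_algl g_identity scaler_sumr -big_split.
by apply: eq_bigr => D _; rewrite fDK_gDK mulrDr scalerAr.
Qed.
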